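(* Let $n>1$ be an integer and $M := \langle x,y \mid (xy,\, y^nx)\rangle$. (1) $M$ is cancellative. (2) For all $k\in\mathbb{N}$, $x^ky =_M y^{n^k}x^k$. (3) For all $k\in\mathbb{N}^+$, $\rho_k(M) = n^{k-1}+k-1$. (4) The differences $\rho_k(M)-\rho_{k-1}(M)$ (for $k\ge 2$) are finite but unbounded.
   Context: $M$ is the monoid generated by $x,y$ subject to the single relation $xy = y^n x$; $\langle x,y\rangle$ is the free monoid on $x,y$. $|a|$ is word length; $a=_M b$ means equal images in $M$. $\mathsf{L}_M(a):=\{|b| : b\in\langle x,y\rangle,\ b=_M a\}$, $\mathcal{L}(M):=\{\mathsf{L}_M(a): a\in\langle x,y\rangle\}$. For $k\in\mathbb{N}$, $\mathcal{U}_k(M):=\bigcup\{L\in\mathcal{L}(M): k\in L\}$ and $\rho_k(M):=\sup\mathcal{U}_k(M)$. Cancellative: $ab=ac$ or $ba=ca$ implies $b=c$. *)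

From Stdlib Require Import List Arith Relations.
Import ListNotations.

Inductive letter : Type := X | Y.

Definition word := list letter.

Definition step (n : nat) (a b : word) : Prop :=
  exists u v : word, a = u ++ [X; Y] ++ v /\ b = u ++ repeat Y n ++ [X] ++ v.

Definition eqM (n : nat) : word -> word -> Prop :=
  clos_refl_sym_trans word (step n).

Definition cancellative (n : nat) : Prop :=
  forall a b c : word,
    (eqM n (a ++ b) (a ++ c) -> eqM n b c) /\
    (eqM n (b ++ a) (c ++ a) -> eqM n b c).

Definition LM (n : nat) (a : word) : nat -> Prop :=
  fun m => exists b : word, length b = m /\ eqM n b a.

Definition calL (n : nat) : (nat -> Prop) -> Prop :=
  fun L => exists a : word, L = LM n a.

Definition Uk (n k : nat) : nat -> Prop :=
  fun m => exists L, calL n L /\ L k /\ L m.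

Definition is_sup (S : nat -> Prop) (r : nat) : Prop :=
  (forall m, S m -> m <= r) /\ (forall b, (forall m, S m -> m <= b) -> r <= b).

From Stdlib Require Import List Arith Lia Relations.
Import ListNotations.

(* Every word w is equal in M to the normal form y^f x^c, where c is the
   number of x's in w and f is computed by pushing each x to the right
   through the y's, multiplying their number by n.  The pair (c, f) is
   invariant under the defining relation, so it is a complete invariant of
   M; cancellativity follows because (c, f) behaves affinely under
   concatenation.  A word of length k with j letters x and k - j letters y
   has f <= (k - j) n^j, so every word equal to it has length at most
   j + (k - j) n^j <= n^(k-1) + k - 1, and x^(k-1) y attains this bound. *)

Lemma clos_rst_invariant (A B : Type) (R : relation A) (f : A -> B) :
  (forall a b, R a b -> f a = f b) ->
  forall a b, clos_refl_sym_trans A R a b -> f a = f b.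
Proof.
  intros Hf a b Hab.
  induction Hab as [a b Hab | a | a b _ IH | a b c _ IH1 _ IH2].
  - apply Hf, Hab.
  - reflexivity.
  - symmetry. exact IH.
  - rewrite IH1. exact IH2.
Qed.

Lemma clos_rst_map (A : Type) (R : relation A) (g : A -> A) :
  (forall a b, R a b -> R (g a) (g b)) ->
  forall a b, clos_refl_sym_trans A R a b -> clos_refl_sym_trans A R (g a) (g b).
Proof.
  intros Hg a b Hab.
  induction Hab as [a b Hab | a | a b _ IH | a b c _ IH1 _ IH2].
  - apply rst_step, Hg, Hab.
  - apply rst_refl.
  - apply rst_sym, IH.
  - eapply rst_trans; eassumption.
Qed.

Fixpoint x_count (w : word) : nat :=
  match w with
  | [] => 0
  | X :: w => S (x_count w)
  | Y :: w => x_count w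
  end.

Fixpoint y_count (w : word) : nat :=
  match w with
  | [] => 0
  | X :: w => y_count w
  | Y :: w => S (y_count w)
  end.

(* The exponent f of the normal form y^f x^(x_count w); the relation reads
   x y^m = y^(n m) x. *)
Fixpoint y_weight (n : nat) (w : word) : nat :=
  match w with
  | [] => 0
  | X :: w => n * y_weight n w
  | Y :: w => S (y_weight n w)
  end.

Lemma x_count_app (u v : word) : x_count (u ++ v) = x_count u + x_count v.
Proof. induction u as [|[] u IH]; simpl; lia. Qed.

Lemma y_weight_app (n : nat) (u v : word) :
  y_weight n (u ++ v) = y_weight n u + n ^ x_count u * y_weight n v.
Proof. induction u as [|[] u IH]; simpl; [lia | rewrite IH; lia | lia]. Qed.

Lemma x_count_repeat_X (m : nat) : x_count (repeat X m) = m.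
Proof. induction m; simpl; auto. Qed.

Lemma x_count_repeat_Y (m : nat) : x_count (repeat Y m) = 0.
Proof. induction m; simpl; auto. Qed.

Lemma y_weight_repeat_X (n m : nat) : y_weight n (repeat X m) = 0.
Proof. induction m; simpl; lia. Qed.

Lemma y_weight_repeat_Y (n m : nat) : y_weight n (repeat Y m) = m.
Proof. induction m; simpl; auto. Qed.

Lemma length_x_count_y_count (w : word) : length w = x_count w + y_count w.
Proof. induction w as [|[] w IH]; simpl; lia. Qed.

Lemma y_count_le_y_weight (n : nat) (w : word) :
  0 < n -> y_count w <= y_weight n w.
Proof. intros Hn. induction w as [|[] w IH]; simpl; nia. Qed.

Lemma y_weight_le (n : nat) (w : word) :
  0 < n -> y_weight n w <= y_count w * n ^ x_count w.
Proof.
  intros Hn. induction w as [|[] w IH]; simpl; try nia.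
  pose proof (Nat.pow_lower_bound n (x_count w)). lia.
Qed.

Lemma step_x_count (n : nat) (a b : word) : step n a b -> x_count a = x_count b.
Proof.
  intros (u & v & -> & ->).
  rewrite !x_count_app, x_count_repeat_Y. reflexivity.
Qed.

Lemma step_y_weight (n : nat) (a b : word) :
  step n a b -> y_weight n a = y_weight n b.
Proof.
  intros (u & v & -> & ->).
  rewrite !y_weight_app, x_count_repeat_Y, y_weight_repeat_Y. simpl. lia.
Qed.

Lemma eqM_app_congr (n : nat) (a b u v : word) :
  eqM n a b -> eqM n (u ++ a ++ v) (u ++ b ++ v).
Proof.
  apply (clos_rst_map _ _ (fun w => u ++ w ++ v)).
  intros a' b' (p & q & -> & ->).
  exists (u ++ p), (q ++ v). rewrite <- !app_assoc. auto.
Qed.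

Lemma eqM_X_repeat_Y (n m : nat) :
  eqM n (X :: repeat Y m) (repeat Y (n * m) ++ [X]).
Proof.
  induction m as [|m IH].
  - rewrite Nat.mul_0_r. apply rst_refl.
  - apply rst_trans with (repeat Y n ++ X :: repeat Y m).
    + apply rst_step. exists [], (repeat Y m). auto.
    + rewrite Nat.mul_succ_r, Nat.add_comm, repeat_app, <- app_assoc.
      pose proof (eqM_app_congr n _ _ (repeat Y n) [] IH) as H.
      rewrite !app_nil_r in H. exact H.
Qed.

Lemma eqM_normal_form (n : nat) (w : word) :
  eqM n w (repeat Y (y_weight n w) ++ repeat X (x_count w)).
Proof.
  induction w as [|[] w IH]; simpl.
  - apply rst_refl.
  - apply rst_trans with (X :: repeat Y (y_weight n w) ++ repeat X (x_count w)).
    + pose proof (eqM_app_congr n _ _ [X] [] IH) as H.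
      rewrite !app_nil_r in H. exact H.
    + pose proof (eqM_app_congr n _ _ [] (repeat X (x_count w))
                    (eqM_X_repeat_Y n (y_weight n w))) as H.
      simpl in H. rewrite <- app_assoc in H. exact H.
  - pose proof (eqM_app_congr n _ _ [Y] [] IH) as H.
    rewrite !app_nil_r in H. exact H.
Qed.

Lemma eqM_iff_invariants (n : nat) (a b : word) :
  eqM n a b <-> x_count a = x_count b /\ y_weight n a = y_weight n b.
Proof.
  split.
  - intros Hab. split.
    + exact (clos_rst_invariant _ _ _ x_count (step_x_count n) a b Hab).
    + exact (clos_rst_invariant _ _ _ (y_weight n) (step_y_weight n) a b Hab).
  - intros [Hx Hy]. apply rst_trans with (1 := eqM_normal_form n a).
    rewrite Hx, Hy. apply rst_sym, eqM_normal_form.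
Qed.

Lemma cancellative_of_pos (n : nat) : 0 < n -> cancellative n.
Proof.
  intros Hn a b c.
  pose proof (Nat.pow_lower_bound n (x_count a)).
  rewrite !eqM_iff_invariants, !x_count_app, !y_weight_app.
  split; intros [Hx Hy]; split; try lia.
  - apply Nat.mul_cancel_l with (p := n ^ x_count a); lia.
  - assert (Hbc : x_count b = x_count c) by lia. rewrite Hbc in Hy. lia.
Qed.

Lemma eqM_repeat_X_Y (n k : nat) :
  eqM n (repeat X k ++ [Y]) (repeat Y (n ^ k) ++ repeat X k).
Proof.
  apply eqM_iff_invariants.
  rewrite !x_count_app, !y_weight_app, x_count_repeat_X, x_count_repeat_Y,
    y_weight_repeat_X, y_weight_repeat_Y. simpl. lia.
Qed.

Lemma length_le_of_eqM (n : nat) (b c : word) :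
  0 < n -> eqM n c b -> length c <= x_count b + y_weight n b.
Proof.
  intros Hn Hcb. apply eqM_iff_invariants in Hcb as [Hx Hy].
  rewrite length_x_count_y_count, <- Hx, <- Hy.
  pose proof (y_count_le_y_weight n c Hn). lia.
Qed.

Definition rho (n k : nat) : nat := n ^ (k - 1) + k - 1.

Lemma add_mul_pow_le_rho (n k j : nat) :
  1 < n -> 1 <= k -> j <= k -> j + (k - j) * n ^ j <= rho n k.
Proof.
  intros Hn Hk Hj. unfold rho.
  destruct (Nat.eq_dec j k) as [-> | Hjk].
  - pose proof (Nat.pow_lower_bound n (k - 1)). lia.
  - destruct (Nat.le_exists_sub (S j) k) as [d [-> _]]; [lia |].
    replace (d + S j - j) with (S d) by lia.
    replace (d + S j - 1) with (j + d) by lia.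
    (* (d + 1) n^j <= n^d n^j *)
    rewrite Nat.pow_add_r.
    pose proof (Nat.pow_gt_lin_r n d Hn).
    pose proof (Nat.pow_lower_bound n j). nia.
Qed.

Lemma x_count_add_y_weight_le_rho (n : nat) (b : word) :
  1 < n -> 1 <= length b -> x_count b + y_weight n b <= rho n (length b).
Proof.
  intros Hn Hb.
  pose proof (length_x_count_y_count b) as Hlen.
  pose proof (add_mul_pow_le_rho n (length b) (x_count b) Hn Hb) as Hrho.
  replace (length b - x_count b) with (y_count b) in Hrho by lia.
  pose proof (y_weight_le n b ltac:(lia)). lia.
Qed.

Lemma Uk_le_rho (n k m : nat) : 1 < n -> 1 <= k -> Uk n k m -> m <= rho n k.
Proof.
  intros Hn Hk (L & (a & ->) & (b & Hb & Hba) & (c & Hc & Hca)).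
  assert (Hcb : eqM n c b) by (apply rst_trans with a; [exact Hca | apply rst_sym, Hba]).
  subst.
  pose proof (length_le_of_eqM n b c ltac:(lia) Hcb).
  pose proof (x_count_add_y_weight_le_rho n b Hn Hk). lia.
Qed.

Lemma Uk_rho (n k : nat) : 1 <= k -> Uk n k (rho n k).
Proof.
  intros Hk. exists (LM n (repeat X (k - 1) ++ [Y])).
  split; [now exists (repeat X (k - 1) ++ [Y]) |]. split.
  - exists (repeat X (k - 1) ++ [Y]). split; [| apply rst_refl].
    rewrite length_app, repeat_length. simpl. lia.
  - exists (repeat Y (n ^ (k - 1)) ++ repeat X (k - 1)). split.
    + rewrite length_app, !repeat_length. unfold rho. lia.
    + apply rst_sym, eqM_repeat_X_Y.
Qed.

Lemma is_sup_Uk (n k : nat) : 1 < n -> 1 <= k -> is_sup (Uk n k) (rho n k).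
Proof.
  intros Hn Hk. split.
  - intros m. apply Uk_le_rho; assumption.
  - intros r Hr. apply Hr, Uk_rho, Hk.
Qed.

Lemma is_sup_unique (S : nat -> Prop) (r r' : nat) :
  is_sup S r -> is_sup S r' -> r = r'.
Proof.
  intros [Hr Hleast] [Hr' Hleast'].
  apply Nat.le_antisymm; [apply Hleast, Hr' | apply Hleast', Hr].
Qed.

Lemma rho_gap_gt (n B : nat) : 1 < n -> B < rho n (S (S B)) - rho n (S B).
Proof.
  intros Hn. unfold rho. simpl. rewrite !Nat.sub_0_r.
  pose proof (Nat.pow_gt_lin_r n B Hn). nia.
Qed.

Theorem lemma6p4 (n : nat) (hn : 1 < n) :
  cancellative n
  /\ (forall k : nat,
        eqM n (repeat X k ++ Y :: nil) (repeat Y (n ^ k) ++ repeat X k))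
  /\ (forall k : nat, 1 <= k -> is_sup (Uk n k) (n ^ (k - 1) + k - 1))
  /\ ((forall k : nat, 1 <= k -> exists r : nat, is_sup (Uk n k) r)
      /\ (forall B : nat, exists k : nat, 2 <= k /\
            forall r r' : nat, is_sup (Uk n k) r -> is_sup (Uk n (k - 1)) r' ->
              B < r - r')).
Proof.
  pose proof (fun k => is_sup_Uk n k hn) as Hsup.
  split; [apply cancellative_of_pos; lia |].
  split; [apply eqM_repeat_X_Y |].
  split; [exact Hsup |].
  split.
  - intros k Hk. exists (rho n k). exact (Hsup k Hk).
  - intros B. exists (S (S B)). split; [lia |].
    intros r r' Hr Hr'.
    rewrite (is_sup_unique _ _ _ Hr (Hsup (S (S B)) ltac:(lia))),
      (is_sup_unique _ _ _ Hr' (Hsup (S B) ltac:(lia))).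
    apply rho_gap_gt, hn.
Qed.
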